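(* Let $\mu$ be a monotone system over $\{0,1\}^V$, $\theta\in(0,1)$ and $T_2\ge1$. For $t\ge1$ define $P^{(t)}_{\mathrm{alg}}=P_{\mathrm{cl}}P_{\mathrm{s\text{-}GD}}$ and $P^{(t)}_{\pi\text{-mGD}}=P_{\mathrm{cl}}P_{\pi\text{-GD}}$ if $(t-1)\bmod T_2=0$, and $P^{(t)}_{\mathrm{alg}}=P_{\mathrm{s\text{-}GD}}$, $P^{(t)}_{\pi\text{-mGD}}=P_{\pi\text{-GD}}$ otherwise. Then $P^{(t)}_{\pi\text{-mGD}}\preceq_{\mathrm{mc}}P^{(t)}_{\mathrm{alg}}$ for all $t\ge1$.
   Context: Monotone system: for every $v$ and all feasible $\sigma\preceq\tau$ in $\{0,1\}^{V\setminus\{v\}}$ (coordinatewise), $\mu^\sigma_v(1)\le\mu^\tau_v(1)$. Tilted $(\theta*\mu)(\sigma)\propto\mu(\sigma)\theta^{\|\sigma\|_1}$. $\mathsf{lift}$: random map $\{0,1\}^V\to\{0,1,\star\}^V$, independently per coordinate $0\mapsto0$, $1\mapsto\star$ w.p. $1-\theta$, $1\mapsto1$ w.p. $\theta$. $\mathsf{contr}$: $0\mapsto0$, $1,\star\mapsto1$. $\pi$: law of $\mathsf{lift}(X)$, $X\sim\mu$, support $\Omega(\pi)$. $P_{\pi\text{-GD}}$: pick $v$ uniformly, resample $X_v$ from $\pi$ given $X_{V\setminus\{v\}}$. $P_{\mathrm{cl}}$: $X\mapsto\mathsf{lift}(\mathsf{contr}(X))$. $P_{\mathrm{s\text{-}GD}}$: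 pick $v$ uniformly; if $X_v=\star$ keep it; otherwise resample $X_v\in\{0,1\}$ from $(\theta*\mu)_v^{\sigma_{V\setminus\{v\}}}$, $\sigma=\mathsf{contr}(X)$. The product $PQ$ means apply $P$ then $Q$. Order $0<1<\star$, coordinatewise partial order. $f:\Omega(\pi)\to\mathbb R_{\ge0}$ is increasing if $X\preceq Y\Rightarrow f(X)\le f(Y)$; $\nu\preceq_{\mathrm{sd}}\nu'$ iff $\mathbb E_\nu f\le\mathbb E_{\nu'}f$ for all increasing $f$. $\mathcal{MC}_\pi$: chains reversible w.r.t. $\pi$ and stochastically monotone ($Pf$ increasing whenever $f$ is). For $P,Q\in\mathcal{MC}_\pi$, $P\preceq_{\mathrm{mc}}Q$ iff for every distribution $\nu$ on $\Omega(\pi)$ such that $\sigma\mapsto\nu(\sigma)/\pi(\sigma)$ is increasing, $\nu P\preceq_{\mathrm{sd}}\nu Q$. *)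

From HB Require Import structures.
From mathcomp Require Import all_boot all_order all_algebra.
Set Implicit Arguments. Unset Strict Implicit. Unset Printing Implicit Defensive.
Import Order.TTheory GRing.Theory Num.Theory.
Local Open Scope ring_scope.

Section Defs.
Variables (R : realFieldType) (V : finType).

Definition config := {ffun V -> bool}.
(* states in {0,1,star}^V, encoded by 'I_3 with 0 = 0, 1 = 1, 2 = star;
   the order 0 < 1 < star is the order of 'I_3 *)
Definition state := {ffun V -> 'I_3}.

Definition sp0 : 'I_3 := @Ordinal 3 0 isT.
Definition sp1 : 'I_3 := @Ordinal 3 1 isT.
Definition spstar : 'I_3 := @Ordinal 3 2 isT.

Definition le_state (X Y : state) : Prop := forall v, (X v <= Y v)%N.
Definition le_config (s t : config) : Prop := forall v, (s v <= t v)%N.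

Definition updc (s : config) (v : V) (b : bool) : config :=
  [ffun u => if u == v then b else s u].
Definition upds (X : state) (v : V) (c : 'I_3) : state :=
  [ffun u => if u == v then c else X u].

Definition agree_off (v : V) (X Y : state) : bool :=
  [forall u, (u != v) ==> (X u == Y u)].

Definition is_distribution {T : finType} (p : T -> R) : Prop :=
  (forall x, 0 <= p x) /\ \sum_x p x = 1.

Definition condv (rho : config -> R) (v : V) (s : config) (b : bool) : R :=
  rho (updc s v b) / (rho (updc s v false) + rho (updc s v true)).

Definition feasible (rho : config -> R) (v : V) (s : config) : Prop :=
  0 < rho (updc s v false) + rho (updc s v true).

Definition monotone_system (mu : config -> R) : Prop :=
  forall (v : V) (s t : config),
    (forall u, u != v -> (s u <= t u)%N) ->
    feasible mu v s -> feasible mu v t ->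
    condv mu v s true <= condv mu v t true.

Definition ones (s : config) : nat := #|[set u | s u]|.

Definition tilted (mu : config -> R) (theta : R) (s : config) : R :=
  mu s * theta ^+ ones s / \sum_(s' : config) mu s' * theta ^+ ones s'.

Definition contr (X : state) : config := [ffun v => X v != sp0].

(* law of lift(sigma): independently 0 -> 0, 1 -> star w.p. 1-theta,
   1 -> 1 w.p. theta *)
Definition lift_prob (theta : R) (s : config) (Y : state) : R :=
  \prod_(v : V)
    (if s v then
       (if Y v == sp1 then theta else if Y v == spstar then 1 - theta else 0)
     else (if Y v == sp0 then 1 else 0)).

Definition pi (mu : config -> R) (theta : R) (Y : state) : R :=
  \sum_(s : config) mu s * lift_prob theta s Y.

Definition in_support (mu : config -> R) (theta : R) (Y : state) : Prop :=
  0 < pi mu theta Y.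

Definition kernel := state -> state -> R.

Definition kmul (P Q : kernel) : kernel :=
  fun X Z => \sum_(Y : state) P X Y * Q Y Z.

Definition dist_step (nu : state -> R) (P : kernel) : state -> R :=
  fun Y => \sum_(X : state) nu X * P X Y.

Definition P_piGD (mu : config -> R) (theta : R) : kernel :=
  fun X Y => #|V|%:R^-1 * \sum_(v : V)
     (if agree_off v X Y then
        pi mu theta Y / \sum_(c : 'I_3) pi mu theta (upds X v c)
      else 0).

Definition P_cl (theta : R) : kernel :=
  fun X Y => lift_prob theta (contr X) Y.

Definition P_sGD (mu : config -> R) (theta : R) : kernel :=
  fun X Y => #|V|%:R^-1 * \sum_(v : V)
     (if X v == spstar then (if Y == X then 1 else 0)
      else if agree_off v X Y && (Y v != spstar) then
        condv (tilted mu theta) v (contr X) (Y v == sp1)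
      else 0).

Definition P_alg (mu : config -> R) (theta : R) (T2 t : nat) : kernel :=
  if ((t - 1) %% T2 == 0)%N then kmul (P_cl theta) (P_sGD mu theta)
  else P_sGD mu theta.

Definition P_pimGD (mu : config -> R) (theta : R) (T2 t : nat) : kernel :=
  if ((t - 1) %% T2 == 0)%N then kmul (P_cl theta) (P_piGD mu theta)
  else P_piGD mu theta.

Definition increasing_on (mu : config -> R) (theta : R) (f : state -> R) : Prop :=
  forall X Y, in_support mu theta X -> in_support mu theta Y ->
    le_state X Y -> f X <= f Y.

Definition expect_on (mu : config -> R) (theta : R) (nu : state -> R)
  (f : state -> R) : R :=
  \sum_(Y : state | 0 < pi mu theta Y) nu Y * f Y.

Definition sd_le (mu : config -> R) (theta : R) (nu nu' : state -> R) : Prop :=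
  forall f : state -> R,
    (forall Y, in_support mu theta Y -> 0 <= f Y) ->
    increasing_on mu theta f ->
    expect_on mu theta nu f <= expect_on mu theta nu' f.

Definition dist_on_support (mu : config -> R) (theta : R) (nu : state -> R) : Prop :=
  is_distribution nu /\ (forall Y, ~ in_support mu theta Y -> nu Y = 0).

Definition mc_le (mu : config -> R) (theta : R) (P Q : kernel) : Prop :=
  forall nu : state -> R,
    dist_on_support mu theta nu ->
    increasing_on mu theta (fun s => nu s / pi mu theta s) ->
    sd_le mu theta (dist_step nu P) (dist_step nu Q).

End Defs.

(* Everything reduces to one site v.  Fixing the configuration off v, the states with
   X_v = 0, 1, star form a fiber on which pi has weights a, b, c.  The pi-Gibbs update
   resamples the fiber from (a, b, c); the s-Gibbs update keeps star and resamples {0, 1}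
   from (a, b), since tilting mu by theta^|sigma| is exactly the weight the lift puts on 1.
   With h = nu / pi and an increasing test function g, both h and g are largest at star on
   the fiber, and the s-Gibbs expectation exceeds the pi-Gibbs one by
   c (a (h2 - h0) + b (h2 - h1)) (a (g2 - g0) + b (g2 - g1)) / ((a + b) (a + b + c)) >= 0.
   For the steps that start with P_cl, nu P_cl has pi-density Y |-> E h(lift (contr Y)),
   which is again increasing because lift s is the restriction to s of lift s' when
   s <= s'; the single-site comparison then applies to nu P_cl. *)

From Pilot Require Import Defs.
From mathcomp Require Import all_boot all_order all_algebra.
From mathcomp Require Import ring lra.
From Stdlib Require Import FunctionalExtensionality.
Import Order.TTheory GRing.Theory Num.Theory.
Local Open Scope ring_scope.
Set Implicit Arguments. Unset Strict Implicit. Unset Printing Implicit Defensive.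

Lemma big_I3 (R : nmodType) (F : 'I_3 -> R) :
  \sum_(c : 'I_3) F c = F sp0 + F sp1 + F spstar.
Proof.
rewrite !big_ord_recl big_ord0 addr0 addrA.
by congr (F _ + F _ + F _); apply: val_inj.
Qed.

Lemma I3P (c : 'I_3) : [\/ c = sp0, c = sp1 | c = spstar].
Proof.
case: c => [[|[|[|n]]] lt_c3] //.
- by constructor 1; apply: val_inj.
- by constructor 2; apply: val_inj.
- by constructor 3; apply: val_inj.
Qed.

Lemma natr_eq_ffun (R : comPzSemiRingType) (T : finType) (E : eqType)
    (f g : {ffun T -> E}) :
  ((f == g)%:R : R) = \prod_u (f u == g u)%:R.
Proof.
case: (pickP (fun u => f u != g u)) => [u neq_u | eq_fg].
  have /negPf-> : f != g by apply: contraNneq neq_u => ->.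
  by rewrite (bigD1 u) //= (negPf neq_u) mul0r.
have -> : f = g by apply/ffunP => u; apply/eqP/negbFE/eq_fg.
by rewrite eqxx big1 // => u _; rewrite eqxx.
Qed.

Lemma mean_product_split_le (R : realFieldType) (a b c h0 h1 h2 g0 g1 g2 : R) :
  0 <= a -> 0 <= b -> 0 <= c ->
  (0 < c -> [/\ a * h0 <= a * h2, b * h1 <= b * h2,
                a * g0 <= a * g2 & b * g1 <= b * g2]) ->
  (a * h0 + b * h1 + c * h2) * (a * g0 + b * g1 + c * g2) / (a + b + c)
    <= c * h2 * g2 + (a * h0 + b * h1) * (a * g0 + b * g1) / (a + b).
Proof.
move=> a_ge0 b_ge0 c_ge0 top_le.
have [-> | c_neq0] := eqVneq c 0; first by rewrite !mul0r !addr0 add0r.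
have c_gt0 : 0 < c by rewrite lt_def c_neq0.
have [ah0 bh1 ag0 bg1] := top_le c_gt0.
have [ab0 | ab_neq0] := eqVneq (a + b) 0.
  have [-> ->] : a = 0 /\ b = 0 by move: ab0 a_ge0 b_ge0; lra.
  by rewrite !mul0r !add0r !mul0r addr0 [c * g2]mulrC mulrA mulfK.
have abc_neq0 : a + b + c != 0.
  by apply/eqP; move: ab_neq0 a_ge0 b_ge0 c_gt0 => /eqP; lra.
rewrite -subr_ge0.
have -> : c * h2 * g2 + (a * h0 + b * h1) * (a * g0 + b * g1) / (a + b)
    - (a * h0 + b * h1 + c * h2) * (a * g0 + b * g1 + c * g2) / (a + b + c)
  = c * (a * h2 - a * h0 + (b * h2 - b * h1)) * (a * g2 - a * g0 + (b * g2 - b * g1))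
      / ((a + b) * (a + b + c)).
  by field; rewrite ab_neq0 abc_neq0.
apply: divr_ge0; last by apply: mulr_ge0; move: ab_neq0 abc_neq0 a_ge0 b_ge0 c_gt0; lra.
apply: mulr_ge0; first apply: mulr_ge0; lra.
Qed.

Section Fibers.
Variable V : finType.
Implicit Types (X Y : state V) (v : V) (c d : 'I_3).

Lemma upds_at X v c : upds X v c v = c.
Proof. by rewrite ffunE eqxx. Qed.

Lemma upds_upds X v c d : upds (upds X v d) v c = upds X v c.
Proof. by apply/ffunP => u; rewrite !ffunE; case: eqP. Qed.

Lemma contr_upds X v c : contr (upds X v c) = updc (contr X) v (c != sp0).
Proof. by apply/ffunP => u; rewrite !ffunE; case: (u == v). Qed.

Lemma agree_offC v X Y : agree_off v X Y = agree_off v Y X.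
Proof. by apply: eq_forallb => u; rewrite [X u == _]eq_sym. Qed.

Lemma eq_upds X Y v c : (Y == upds X v c) = agree_off v X Y && (Y v == c).
Proof.
apply/eqP/andP => [-> | [/forallP agr /eqP <-]].
  split; last by rewrite upds_at.
  by apply/forallP => u; apply/implyP => /negPf uv; rewrite ffunE uv.
apply/ffunP => u; rewrite ffunE; case: eqP => [-> // | /eqP uv].
by apply/esym/eqP; rewrite (implyP (agr u)).
Qed.

Lemma le_contr X Y : le_state X Y -> le_config (contr X) (contr Y).
Proof.
move=> le_XY u; rewrite !ffunE; have := le_XY u.
by case: (I3P (X u)) => ->; case: (I3P (Y u)) => ->.
Qed.

Variable R : nmodType.

Lemma sum_agree_off X v (F : state V -> R) :
  \sum_(Y | agree_off v X Y) F Y = \sum_c F (upds X v c).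
Proof.
rewrite (partition_big (fun Y => Y v) predT) //=; apply: eq_bigr => c _.
by apply: big_pred1 => Y; rewrite /= eq_upds.
Qed.

Lemma sum_fibers v (F : state V -> R) :
  \sum_Y F Y = \sum_(B : state V | B v == sp0) \sum_c F (upds B v c).
Proof.
under [RHS]eq_bigr do rewrite -sum_agree_off.
rewrite (exchange_big_dep predT) //=; apply: eq_bigr => Y _.
by apply/esym/(big_pred1 (upds Y v sp0)) => B; rewrite /= eq_upds agree_offC andbC.
Qed.

End Fibers.

Section Kernels.
Variables (R : realFieldType) (V : finType).
Implicit Types (nu : state V -> R) (P Q : kernel R V).

Lemma dist_step_kmul nu P Q :
  dist_step nu (kmul P Q) = dist_step (dist_step nu P) Q.
Proof.
apply: functional_extensionality => Z; rewrite /dist_step /kmul.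
under eq_bigr do rewrite big_distrr /=.
rewrite exchange_big; apply: eq_bigr => Y _; rewrite big_distrl /=.
by apply: eq_bigr => X _; rewrite mulrA.
Qed.

Lemma sum_dist_step_mix nu (G : state V -> R) (k : R) (K : V -> kernel R V) :
  \sum_Y dist_step nu (fun X Y => k * \sum_v K v X Y) Y * G Y =
  k * \sum_v \sum_X nu X * \sum_Y K v X Y * G Y.
Proof.
transitivity (\sum_X \sum_Y \sum_v k * (nu X * (K v X Y * G Y))).
  rewrite /dist_step; under eq_bigr do rewrite big_distrl /=.
  rewrite exchange_big; apply: eq_bigr => X _; apply: eq_bigr => Y _.
  rewrite mulrCA -mulrA !big_distrr /= big_distrl /= big_distrr.
  by apply: eq_bigr => v _; rewrite /= !mulrA.
under eq_bigr do rewrite exchange_big /=.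
rewrite exchange_big big_distrr /=; apply: eq_bigr => v _.
by rewrite big_distrr; apply: eq_bigr => X _; rewrite /= !big_distrr.
Qed.

End Kernels.

Section Lift.
Variables (R : realFieldType) (V : finType) (theta : R).
Hypotheses (theta_gt0 : 0 < theta) (theta_lt1 : theta < 1).
Implicit Types (s : config V) (X Y : state V).

Definition lift_site (b : bool) (c : 'I_3) : R :=
  if b then (if c == sp1 then theta else if c == spstar then 1 - theta else 0)
  else (if c == sp0 then 1 else 0).

Lemma lift_probE s Y : lift_prob theta s Y = \prod_v lift_site (s v) (Y v).
Proof. by []. Qed.

Lemma lift_site_ge0 b c : 0 <= lift_site b c.
Proof.
by rewrite /lift_site; case: b; repeat case: ifP => _; move: theta_gt0 theta_lt1; lra.
Qed.

Lemma lift_site_contr_gt0 c : 0 < lift_site (c != sp0) c.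
Proof. by case: (I3P c) => ->; rewrite /lift_site /=; move: theta_gt0 theta_lt1; lra. Qed.

Lemma lift_site_eq0 b c : b != (c != sp0) -> lift_site b c = 0.
Proof. by case: (I3P c) => ->; case: b. Qed.

Lemma sum_lift_site b : \sum_c lift_site b c = 1.
Proof. by rewrite big_I3 /lift_site; case: b => /=; lra. Qed.

Lemma lift_prob_ge0 s Y : 0 <= lift_prob theta s Y.
Proof. by apply: prodr_ge0 => v _; apply: lift_site_ge0. Qed.

Lemma lift_prob_contr_gt0 Y : 0 < lift_prob theta (contr Y) Y.
Proof. by apply: prodr_gt0 => v _; rewrite ffunE; apply: lift_site_contr_gt0. Qed.

Lemma lift_prob_eq0 s Y : s != contr Y -> lift_prob theta s Y = 0.
Proof.
move=> neq_s; case: (pickP (fun u => s u != contr Y u)) => [u neq_u | eq_s].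
  rewrite lift_probE (bigD1 u) //= lift_site_eq0 ?mul0r //.
  by rewrite -(ffunE (fun u => Y u != sp0)).
by case/eqP: neq_s; apply/ffunP => u; apply/eqP/negbFE/eq_s.
Qed.

Definition restrict s X : state V := [ffun u => if s u then X u else sp0].

Lemma contr_restrict s X : le_config s (contr X) -> contr (restrict s X) = s.
Proof.
move=> le_sX; apply/ffunP => u; rewrite !ffunE.
by move: (le_sX u); rewrite ffunE; case: (s u); case: (X u != sp0).
Qed.

Lemma le_restrict s X : le_state (restrict s X) X.
Proof. by move=> u; rewrite ffunE; case: (s u). Qed.

Lemma sum_lift_site_restrict (b b' : bool) c : (b <= b')%N ->
  \sum_d ((if b then d else sp0) == c)%:R * lift_site b' d = lift_site b c.
Proof.
case: b => [| _].
  case: b' => // _; rewrite (bigD1 c) //= eqxx mul1r big1 ?addr0 // => d /negPf neq_dc.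
  by rewrite neq_dc mul0r.
by rewrite -big_distrr /= sum_lift_site mulr1 /lift_site eq_sym; case: (c == sp0).
Qed.

Lemma sum_lift_prob_restrict s s' X : le_config s s' ->
  \sum_(X' | restrict s X' == X) lift_prob theta s' X' = lift_prob theta s X.
Proof.
move=> le_ss'; rewrite big_mkcond /=.
under eq_bigr => X' _ do
  rewrite -mulrb -mulr_natl natr_eq_ffun lift_probE -big_split /=.
under eq_bigr do under eq_bigr do rewrite ffunE.
rewrite -(bigA_distr_bigA (fun u d => ((if s u then d else sp0) == X u)%:R
                                      * lift_site (s' u) d)).
by rewrite lift_probE; apply: eq_bigr => u _; apply: sum_lift_site_restrict.
Qed.

Lemma sum_lift_prob_comp_restrict s s' (g : state V -> R) : le_config s s' ->
  \sum_X' lift_prob theta s' X' * g (restrict s X') =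
  \sum_X lift_prob theta s X * g X.
Proof.
move=> le_ss'; rewrite (partition_big (restrict s) predT) //=.
apply: eq_bigr => X _; rewrite -(sum_lift_prob_restrict X le_ss') big_distrl /=.
by apply: eq_bigr => X' /eqP <-.
Qed.

Section LiftedLaw.
Variable mu : config V -> R.
Hypothesis mu_ge0 : forall s, 0 <= mu s.
Local Notation pi := (Defs.pi mu theta).

Definition vanishes_off_support (nu : state V -> R) : Prop :=
  forall Y, ~ in_support mu theta Y -> nu Y = 0.

Lemma piE Y : pi Y = mu (contr Y) * lift_prob theta (contr Y) Y.
Proof.
rewrite /Defs.pi (bigD1 (contr Y)) //= big1 ?addr0 // => s neq_s.
by rewrite lift_prob_eq0 ?mulr0.
Qed.

Lemma pi_ge0 Y : 0 <= pi Y.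
Proof. by rewrite piE mulr_ge0 ?lift_prob_ge0. Qed.

Lemma pi_gt0E Y : (0 < pi Y) = (0 < mu (contr Y)).
Proof. by rewrite piE pmulr_lgt0 // lift_prob_contr_gt0. Qed.

Lemma density_mulK nu Y : vanishes_off_support nu -> nu Y / pi Y * pi Y = nu Y.
Proof.
move=> nu0; have [pi_gt0 | ] := ltrP 0 (pi Y); first by rewrite divfK // gt_eqF.
rewrite le_eqVlt ltNge pi_ge0 orbF => /eqP pi0.
by rewrite pi0 mulr0 nu0 // /in_support pi0 ltxx.
Qed.

Definition lift_mean (h : state V -> R) s : R := \sum_X lift_prob theta s X * h X.

Lemma lift_mean_le h s s' : increasing_on mu theta h -> le_config s s' ->
  0 < mu s -> 0 < mu s' -> lift_mean h s <= lift_mean h s'.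
Proof.
move=> h_incr le_ss' mu_s mu_s'.
rewrite /lift_mean -(sum_lift_prob_comp_restrict _ le_ss'); apply: ler_sum => X _.
have [s'X | /lift_prob_eq0->] := eqVneq s' (contr X); last by rewrite !mul0r.
apply: ler_wpM2l; first exact: lift_prob_ge0.
have contr_rX : contr (restrict s X) = s by apply: contr_restrict; rewrite -s'X.
apply: h_incr; last exact: le_restrict.
- by rewrite /in_support pi_gt0E contr_rX.
- by rewrite /in_support pi_gt0E -s'X.
Qed.

Lemma dist_step_P_cl nu Y : vanishes_off_support nu ->
  dist_step nu (P_cl theta) Y = pi Y * lift_mean (fun X => nu X / pi X) (contr Y).
Proof.
move=> nu0; rewrite /dist_step /P_cl /lift_mean big_distrr /=.
apply: eq_bigr => X _; rewrite -{1}(density_mulK X nu0) [pi X]piE.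
have [-> | neq_XY] := eqVneq (contr X) (contr Y); first by rewrite piE; ring.
rewrite (lift_prob_eq0 neq_XY) (lift_prob_eq0 (s := contr Y) (Y := X)) 1?eq_sym //.
by rewrite !(mulr0, mul0r).
Qed.

Lemma P_cl_vanishes_off_support nu : vanishes_off_support nu ->
  vanishes_off_support (dist_step nu (P_cl theta)).
Proof.
move=> nu0 Y Y_out; rewrite dist_step_P_cl //.
suff -> : pi Y = 0 by rewrite mul0r.
by apply/eqP; rewrite eq_le pi_ge0 andbT leNgt; apply/negP.
Qed.

Lemma P_cl_density_increasing nu : vanishes_off_support nu ->
  increasing_on mu theta (fun Y => nu Y / pi Y) ->
  increasing_on mu theta (fun Y => dist_step nu (P_cl theta) Y / pi Y).
Proof.
move=> nu0 nu_incr X Y X_in Y_in le_XY.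
rewrite !dist_step_P_cl // ![pi _ * _]mulrC !mulfK ?gt_eqF //.
by apply: lift_mean_le; rewrite -?pi_gt0E //; exact: le_contr.
Qed.

Lemma ones_updc s v b : ones (updc s v b) = (b + ones (updc s v false))%N.
Proof.
case: b => //.
rewrite /ones (_ : [set u | updc s v true u] = v |: [set u | updc s v false u]).
  by rewrite cardsU1 inE ffunE eqxx.
by apply/setP => u; rewrite !inE !ffunE; case: eqP.
Qed.

Lemma pi_upds X v : exists2 w, 0 < w & forall c,
  pi (upds X v c) = mu (updc (contr X) v (c != sp0)) * lift_site (c != sp0) c * w.
Proof.
exists (\prod_(u | u != v) lift_site (contr X u) (X u)).
  by apply: prodr_gt0 => u _; rewrite ffunE; apply: lift_site_contr_gt0.
move=> c; rewrite piE contr_upds lift_probE (bigD1 v) //= !ffunE !eqxx mulrA.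
by congr (_ * _); apply: eq_bigr => u /negPf uv; rewrite !ffunE uv.
Qed.

Hypothesis mu_sum : \sum_s mu s = 1.

Lemma tilted_normalizer_gt0 : 0 < \sum_s mu s * theta ^+ ones s.
Proof.
have term_ge0 s : 0 <= mu s * theta ^+ ones s by rewrite mulr_ge0 ?exprn_ge0 // ltW.
rewrite lt_def sumr_ge0 // andbT; apply: contra_neq (@oner_neq0 R) => sum0.
rewrite -mu_sum big1 // => s _.
move/eqP: (psumr_eq0P (fun s _ => term_ge0 s) sum0 (i := s) isT).
by rewrite mulf_eq0 expf_eq0 (gt_eqF theta_gt0) andbF orbF => /eqP.
Qed.

Lemma condv_tilted X v b :
  condv (tilted mu theta) v (contr X) b =
  pi (upds X v (if b then sp1 else sp0)) / (pi (upds X v sp0) + pi (upds X v sp1)).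
Proof.
have [w w_gt0 piE'] := pi_upds X v.
set t := theta ^+ ones (updc (contr X) v false) / ((\sum_s mu s * theta ^+ ones s) * w).
have t_neq0 : t != 0.
  by rewrite mulf_neq0 ?invr_eq0 ?mulf_neq0 ?expf_neq0 ?gt_eqF ?tilted_normalizer_gt0.
have tiltedE b' : tilted mu theta (updc (contr X) v b') =
    pi (upds X v (if b' then sp1 else sp0)) * t.
  rewrite /tilted piE' ones_updc exprD /t; case: b' => /=; field;
  by rewrite (gt_eqF w_gt0) (gt_eqF tilted_normalizer_gt0).
by rewrite /condv !tiltedE -mulrDl invfM mulrACA mulfV // mulr1.
Qed.

Definition piGD_site v : kernel R V := fun X Y =>
  if agree_off v X Y then pi Y / \sum_c pi (upds X v c) else 0.

Definition sGD_site v : kernel R V := fun X Y =>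
  if X v == spstar then (if Y == X then 1 else 0)
  else if agree_off v X Y && (Y v != spstar) then
    condv (tilted mu theta) v (contr X) (Y v == sp1)
  else 0.

Lemma sum_piGD_site X v (G : state V -> R) :
  \sum_Y piGD_site v X Y * G Y =
  (pi (upds X v sp0) * G (upds X v sp0) + pi (upds X v sp1) * G (upds X v sp1)
   + pi (upds X v spstar) * G (upds X v spstar))
  / (pi (upds X v sp0) + pi (upds X v sp1) + pi (upds X v spstar)).
Proof.
under eq_bigr do rewrite /piGD_site (fun_if (fun x => x * G _)) mul0r.
by rewrite -big_mkcond sum_agree_off !big_I3; ring.
Qed.

Lemma sum_sGD_site_star X v (G : state V -> R) :
  X v = spstar -> \sum_Y sGD_site v X Y * G Y = G X.
Proof.
move=> Xv; rewrite (bigD1 X) //= /sGD_site Xv !eqxx mul1r big1 ?addr0 //.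
by move=> Y /negPf neq_YX; rewrite neq_YX mul0r.
Qed.

Lemma sum_sGD_site X v (G : state V -> R) : X v != spstar ->
  \sum_Y sGD_site v X Y * G Y =
  (pi (upds X v sp0) * G (upds X v sp0) + pi (upds X v sp1) * G (upds X v sp1))
  / (pi (upds X v sp0) + pi (upds X v sp1)).
Proof.
move=> /negPf Xv.
under eq_bigr do rewrite /sGD_site Xv (fun_if (fun x => x * G _)) mul0r.
by rewrite -big_mkcond big_mkcondr sum_agree_off big_I3 !upds_at !condv_tilted /=; ring.
Qed.

Lemma mul_pi_upds_le F X v (c d : 'I_3) : 0 < pi (upds X v d) ->
  increasing_on mu theta F -> (c <= d)%N ->
  pi (upds X v c) * F (upds X v c) <= pi (upds X v c) * F (upds X v d).
Proof.
move=> pi_d F_incr le_cd; have [-> | pi_c] := eqVneq (pi (upds X v c)) 0.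
  by rewrite !mul0r.
apply: ler_wpM2l; first exact: pi_ge0.
apply: F_incr => //; first by rewrite /in_support lt_def pi_c pi_ge0.
by move=> u; rewrite !ffunE; case: (u == v).
Qed.

Lemma fiber_piGD_le_sGD nu (G : state V -> R) v B :
  vanishes_off_support nu -> increasing_on mu theta (fun Y => nu Y / pi Y) ->
  increasing_on mu theta G ->
  \sum_d nu (upds B v d) * \sum_Y piGD_site v (upds B v d) Y * G Y
  <= \sum_d nu (upds B v d) * \sum_Y sGD_site v (upds B v d) Y * G Y.
Proof.
move=> nu0 nu_incr G_incr.
rewrite !big_I3 !sum_piGD_site (sum_sGD_site_star G (upds_at B v spstar)).
rewrite !(sum_sGD_site G (X := upds B v _)) ?upds_at // !upds_upds.
rewrite -[nu (upds B v sp0)](density_mulK _ nu0) -[nu (upds B v sp1)](density_mulK _ nu0).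
rewrite -[nu (upds B v spstar)](density_mulK _ nu0).
have top_le : 0 < pi (upds B v spstar) -> [/\
    pi (upds B v sp0) * (nu (upds B v sp0) / pi (upds B v sp0))
      <= pi (upds B v sp0) * (nu (upds B v spstar) / pi (upds B v spstar)),
    pi (upds B v sp1) * (nu (upds B v sp1) / pi (upds B v sp1))
      <= pi (upds B v sp1) * (nu (upds B v spstar) / pi (upds B v spstar)),
    pi (upds B v sp0) * G (upds B v sp0) <= pi (upds B v sp0) * G (upds B v spstar) &
    pi (upds B v sp1) * G (upds B v sp1) <= pi (upds B v sp1) * G (upds B v spstar)].
  move=> pi_star; split.
  - exact: (mul_pi_upds_le pi_star nu_incr).
  - exact: (mul_pi_upds_le pi_star nu_incr).
  - exact: (mul_pi_upds_le pi_star G_incr).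
  - exact: (mul_pi_upds_le pi_star G_incr).
move: top_le (pi_ge0 (upds B v sp0)) (pi_ge0 (upds B v sp1)) (pi_ge0 (upds B v spstar)).
set a := pi (upds B v sp0); set b := pi (upds B v sp1); set c := pi (upds B v spstar).
set h0 := nu _ / a; set h1 := nu _ / b; set h2 := nu _ / c.
set g0 := G (upds B v sp0); set g1 := G (upds B v sp1); set g2 := G (upds B v spstar).
move=> top_le a_ge0 b_ge0 c_ge0.
rewrite [X in X <= _](_ : _ =
  (a * h0 + b * h1 + c * h2) * (a * g0 + b * g1 + c * g2) / (a + b + c)); last by ring.
rewrite [X in _ <= X](_ : _ =
  c * h2 * g2 + (a * h0 + b * h1) * (a * g0 + b * g1) / (a + b)); last by ring.
exact: mean_product_split_le.
Qed.

Lemma site_piGD_le_sGD nu (G : state V -> R) v :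
  vanishes_off_support nu -> increasing_on mu theta (fun Y => nu Y / pi Y) ->
  increasing_on mu theta G ->
  \sum_X nu X * \sum_Y piGD_site v X Y * G Y
  <= \sum_X nu X * \sum_Y sGD_site v X Y * G Y.
Proof.
move=> nu0 nu_incr G_incr.
rewrite [X in X <= _](sum_fibers v) [X in _ <= X](sum_fibers v).
by apply: ler_sum => B _; apply: fiber_piGD_le_sGD.
Qed.

Lemma expect_on_dist_step nu (K : kernel R V) f :
  expect_on mu theta (dist_step nu K) f =
  \sum_Y dist_step nu K Y * (if 0 < pi Y then f Y else 0).
Proof.
by rewrite /expect_on big_mkcond; apply: eq_bigr => Y _; case: ifP; rewrite ?mulr0.
Qed.

Lemma sd_le_piGD_sGD nu :
  vanishes_off_support nu -> increasing_on mu theta (fun Y => nu Y / pi Y) ->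
  sd_le mu theta (dist_step nu (P_piGD mu theta)) (dist_step nu (P_sGD mu theta)).
Proof.
move=> nu0 nu_incr f _ f_incr; rewrite !expect_on_dist_step.
rewrite (sum_dist_step_mix _ _ _ piGD_site) (sum_dist_step_mix _ _ _ sGD_site).
apply: ler_wpM2l; first by rewrite invr_ge0 ler0n.
apply: ler_sum => v _; apply: site_piGD_le_sGD => // X Y X_in Y_in le_XY.
by rewrite X_in Y_in; apply: f_incr.
Qed.

Lemma sd_le_cl_piGD_cl_sGD nu :
  vanishes_off_support nu -> increasing_on mu theta (fun Y => nu Y / pi Y) ->
  sd_le mu theta (dist_step nu (kmul (P_cl theta) (P_piGD mu theta)))
                 (dist_step nu (kmul (P_cl theta) (P_sGD mu theta))).
Proof.
move=> nu0 nu_incr; rewrite !dist_step_kmul.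
apply: sd_le_piGD_sGD; first exact: P_cl_vanishes_off_support.
exact: P_cl_density_increasing.
Qed.

End LiftedLaw.
End Lift.

Unset Implicit Arguments.

Theorem lemma3p6 (R : realFieldType) (V : finType) (mu : config V -> R)
  (theta : R) (T2 : nat) :
  (0 < #|V|)%N ->
  is_distribution mu ->
  monotone_system mu ->
  0 < theta < 1 ->
  (1 <= T2)%N ->
  forall t : nat, (1 <= t)%N ->
    mc_le mu theta (P_pimGD mu theta T2 t) (P_alg mu theta T2 t).
Proof.
move=> _ [mu_ge0 mu_sum] _ /andP[theta_gt0 theta_lt1] _ t _ nu [_ nu0] nu_incr.
rewrite /P_pimGD /P_alg; case: ifP => _.
  exact: (sd_le_cl_piGD_cl_sGD theta_gt0 theta_lt1 mu_ge0 mu_sum).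
exact: (sd_le_piGD_sGD theta_gt0 theta_lt1 mu_ge0 mu_sum).
Qed.
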